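(* The set of bounded elements of $\mathcal{P}_{\mathrm{fci}}(I)$ is a definable subset of the structure $\mathcal{L}(I)$.
   Context: Let $I$ be a dense linear order with left endpoint $0$ and no right endpoint. Let $\mathcal{P}_{\mathrm{fci}}(I)$ be the set of finite unions of closed intervals $[i,j]$, $[i,+\infty)$, $(-\infty,j]$ of $I$. $\mathcal{L}(I)$ is the structure with universe $\mathcal{P}_{\mathrm{fci}}(I)$ in the signature $\{\cup,\cap,\bot,c_0,\min,\max,l,r\}$, interpreted as follows. - $\cup$ and $\cap$ are union and intersection. - $\bot$ is $\emptyset$, and $c_0$ is $\{0\}$. - $\min(A)$ is the singleton of the least element of $A$, with $\min(\emptyset)=\emptyset$. - $\max(A)$ is the singleton of the greatest element when $A$ is nonempty and bounded, and $\emptyset$ otherwise. - $l(A)$ and $r(A)$ are the sets of left and right endpoints of $A$. Left endpoints are the minima of the maximal closed intervals composing $A$. Right endpoints are the maxima of the bounded ones. *)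

From Stdlib Require Import List.
Import ListNotations.

Record dlo_left_endpoint (T : Type) (lt : T -> T -> Prop) (z : T) : Prop := {
  dlo_irrefl : forall x, ~ lt x x;
  dlo_trans : forall x y w, lt x y -> lt y w -> lt x w;
  dlo_total : forall x y, lt x y \/ x = y \/ lt y x;
  dlo_dense : forall x y, lt x y -> exists w, lt x w /\ lt w y;
  dlo_left : forall x, ~ lt x z;
  dlo_no_right : forall x, exists y, lt x y
}.

Arguments dlo_left_endpoint {T}.

Section Sets.
Variables (T : Type) (lt : T -> T -> Prop) (z : T).

Definition le (x y : T) : Prop := lt x y \/ x = y.

Definition set := T -> Prop.

Inductive cinterval : Type :=
| ICC : T -> T -> cinterval
| IGe : T -> cinterval
| ILe : T -> cinterval.

Definition cint_mem (c : cinterval) : set :=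
  match c with
  | ICC i j => fun x => le i x /\ le x j
  | IGe i => fun x => le i x
  | ILe j => fun x => le x j
  end.

Definition is_fci (A : set) : Prop :=
  exists cs : list cinterval,
    forall x, A x <-> exists c, In c cs /\ cint_mem c x.

Definition is_cint (C : set) : Prop :=
  exists c, forall x, C x <-> cint_mem c x.

Definition subset (A B : set) : Prop := forall x, A x -> B x.

Definition s_cup (A B : set) : set := fun x => A x \/ B x.
Definition s_cap (A B : set) : set := fun x => A x /\ B x.
Definition s_bot : set := fun _ => False.
Definition s_c0 : set := fun x => x = z.
Definition s_min (A : set) : set := fun x => A x /\ forall y, A y -> le x y.
(** singleton of the greatest element, empty if there is none
    (for A in P_fci(I): iff A is empty or unbounded) *)
Definition s_max (A : set) : set := fun x => A x /\ forall y, A y -> le y x.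

Definition maximal_cint (A C : set) : Prop :=
  is_cint C /\ subset C A /\
  forall D, is_cint D -> subset C D -> subset D A -> subset D C.

Definition s_l (A : set) : set :=
  fun x => exists C, maximal_cint A C /\ s_min C x.
Definition s_r (A : set) : set :=
  fun x => exists C, maximal_cint A C /\ s_max C x.

Definition bounded (A : set) : Prop := exists b, forall x, A x -> le x b.

End Sets.
Arguments s_cup {T}.
Arguments s_cap {T}.
Arguments s_c0 {T}.
Arguments s_min {T}.
Arguments s_max {T}.
Arguments s_l {T}.
Arguments s_r {T}.
Arguments is_fci {T}.
Arguments bounded {T}.

Inductive term : Type :=
| TVar : nat -> term
| TCup : term -> term -> term
| TCap : term -> term -> term
| TBot : term
| TC0 : term
| TMin : term -> term
| TMax : term -> term
| TL : term -> term
| TR : term -> term.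

Inductive formula : Type :=
| FEq : term -> term -> formula
| FFalse : formula
| FNot : formula -> formula
| FAnd : formula -> formula -> formula
| FOr : formula -> formula -> formula
| FImp : formula -> formula -> formula
| FEx : nat -> formula -> formula
| FAll : nat -> formula -> formula.

Section Semantics.
Variables (T : Type) (lt : T -> T -> Prop) (z : T).

Fixpoint eval_term (env : nat -> set T) (t : term) : set T :=
  match t with
  | TVar n => env n
  | TCup a b => s_cup (eval_term env a) (eval_term env b)
  | TCap a b => s_cap (eval_term env a) (eval_term env b)
  | TBot => s_bot T
  | TC0 => s_c0 z
  | TMin a => s_min lt (eval_term env a)
  | TMax a => s_max lt (eval_term env a)
  | TL a => s_l lt (eval_term env a)
  | TR a => s_r lt (eval_term env a)
  end.

Definition update (env : nat -> set T) (n : nat) (A : set T) : nat -> set T :=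
  fun m => if Nat.eqb m n then A else env m.

(** Satisfaction in L(I): quantifiers range over P_fci(I);
    equality is (extensional) equality of subsets of I. *)
Fixpoint sat (env : nat -> set T) (phi : formula) : Prop :=
  match phi with
  | FEq a b => forall x, eval_term env a x <-> eval_term env b x
  | FFalse => False
  | FNot p => ~ sat env p
  | FAnd p q => sat env p /\ sat env q
  | FOr p q => sat env p \/ sat env q
  | FImp p q => sat env p -> sat env q
  | FEx n p => exists A, is_fci lt A /\ sat (update env n A) p
  | FAll n p => forall A, is_fci lt A -> sat (update env n A) p
  end.

(** X (a predicate on P_fci(I)) is definable (without parameters) in L(I):
    some formula phi, read with free variable 0, defines X in every
    assignment of elements of P_fci(I) to the variables. *)
Definition definable (X : set T -> Prop) : Prop :=
  exists phi : formula,
    forall env : nat -> set T, (forall n, is_fci lt (env n)) ->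
      (sat env phi <-> X (env 0)).

End Semantics.
Arguments definable {T}.

(* A bounded finite union of closed intervals is either empty or has a
   greatest element: each of its intervals is empty or of the form [i,j] or
   (-oo,j] (a ray [i,+oo) is unbounded since I has no right endpoint), and the
   larger of two maxima is a maximum of the union.  Conversely a set with a
   maximum is bounded, and so is the empty set.  Hence the bounded elements
   are defined by  A = bot \/ max A <> bot. *)

From Stdlib Require Import List Classical.

Section BoundedFci.
Variables (T : Type) (lt : T -> T -> Prop) (z : T).
Hypothesis HI : dlo_left_endpoint lt z.

Notation le := (le T lt).

Lemma dlo_le_trans x y w : le x y -> le y w -> le x w.
Proof.
  intros [Hxy|<-] [Hyw|<-]; unfold le; auto.
  left; exact (dlo_trans _ _ _ HI _ _ _ Hxy Hyw).
Qed.

Lemma dlo_lt_le_absurd x y : lt x y -> le y x -> False.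
Proof.
  intros Hxy [Hyx| ->].
  - exact (dlo_irrefl _ _ _ HI x (dlo_trans _ _ _ HI _ _ _ Hxy Hyx)).
  - exact (dlo_irrefl _ _ _ HI x Hxy).
Qed.

Definition empty_or_has_max (A : set T) : Prop :=
  (forall x, ~ A x) \/ exists m, s_max lt A m.

Lemma empty_or_has_max_ext (A B : set T) :
  (forall x, A x <-> B x) -> empty_or_has_max A -> empty_or_has_max B.
Proof.
  intros HAB [HA|[m [Am Hm]]].
  - left; intros x Bx; apply (HA x), HAB, Bx.
  - right; exists m; split; [apply HAB, Am|].
    intros y By; apply Hm, HAB, By.
Qed.

Lemma empty_or_has_max_cup (A B : set T) :
  empty_or_has_max A -> empty_or_has_max B -> empty_or_has_max (s_cup A B).
Proof.
  unfold s_cup.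
  intros [HA|[a [Aa Ha]]] [HB|[b [Bb Hb]]].
  - left; intros x [Ax|Bx]; [exact (HA x Ax)|exact (HB x Bx)].
  - right; exists b; split; auto.
    intros y [Ay|By]; [destruct (HA y Ay)|auto].
  - right; exists a; split; auto.
    intros y [Ay|By]; [auto|destruct (HB y By)].
  - destruct (dlo_total _ _ _ HI a b) as [Hab|[<-|Hba]].
    + right; exists b; split; auto.
      intros y [Ay|By]; auto.
      apply (dlo_le_trans _ a); [auto|left; exact Hab].
    + right; exists a; split; auto.
      intros y [Ay|By]; auto.
    + right; exists a; split; auto.
      intros y [Ay|By]; auto.
      apply (dlo_le_trans _ b); [auto|left; exact Hba].
Qed.

Lemma ray_unbounded i : ~ bounded lt (cint_mem T lt (IGe T i)).
Proof.
  intros [b Hb]; simpl in Hb.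
  destruct (dlo_no_right _ _ _ HI b) as [y Hby].
  assert (Hiy : le i y).
  { exact (dlo_le_trans _ _ _ (Hb i (or_intror eq_refl)) (or_introl Hby)). }
  exact (dlo_lt_le_absurd _ _ Hby (Hb y Hiy)).
Qed.

Lemma bounded_cint_empty_or_has_max c :
  bounded lt (cint_mem T lt c) -> empty_or_has_max (cint_mem T lt c).
Proof.
  destruct c as [i j|i|j]; simpl; intros Hbd.
  - destruct (dlo_total _ _ _ HI j i) as [Hji|Hij].
    + left; intros x [Hix Hxj].
      exact (dlo_lt_le_absurd _ _ Hji (dlo_le_trans _ _ _ Hix Hxj)).
    + right; exists j; split; [|intros y [_ Hyj]; exact Hyj].
      split; [|right; reflexivity].
      destruct Hij as [<-|Hij]; [right|left]; auto.
  - destruct (ray_unbounded i Hbd).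
  - right; exists j; split; [right; reflexivity|auto].
Qed.

Lemma bounded_fci_empty_or_has_max (A : set T) :
  is_fci lt A -> bounded lt A -> empty_or_has_max A.
Proof.
  intros [cs Hcs] [b Hb].
  apply (empty_or_has_max_ext (fun x => exists c, In c cs /\ cint_mem T lt c x));
    [intro x; symmetry; apply Hcs|].
  assert (Hcsb : forall x, (exists c, In c cs /\ cint_mem T lt c x) -> le x b)
    by (intros x Hx; apply Hb, Hcs, Hx).
  clear A Hcs Hb.
  induction cs as [|c cs IH].
  - left; intros x [c [[] _]].
  - apply (empty_or_has_max_ext (s_cup (cint_mem T lt c)
             (fun x => exists c', In c' cs /\ cint_mem T lt c' x))).
    { intro x; unfold s_cup; simpl; split.
      - intros [Hc|[c' [Hin Hc']]]; eauto.
      - intros [c' [[<-|Hin] Hc']]; eauto. }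
    apply empty_or_has_max_cup.
    + apply bounded_cint_empty_or_has_max.
      exists b; intros x Hx; apply Hcsb; exists c; simpl; auto.
    + apply IH; intros x [c' [Hin Hc']]; apply Hcsb; exists c'; simpl; auto.
Qed.

Lemma bounded_fci_iff (A : set T) :
  is_fci lt A -> (bounded lt A <-> empty_or_has_max A).
Proof.
  intros HA; split; [exact (bounded_fci_empty_or_has_max A HA)|].
  intros [Hempty|[m [_ Hm]]].
  - exists z; intros x Ax; destruct (Hempty x Ax).
  - exists m; exact Hm.
Qed.

End BoundedFci.

Theorem lemma4p3 (T : Type) (lt : T -> T -> Prop) (z : T)
  (HI : dlo_left_endpoint lt z) :
  definable lt z (bounded lt).
Proof.
  exists (FOr (FEq (TVar 0) TBot) (FNot (FEq (TMax (TVar 0)) TBot))).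
  intros env Henv; simpl.
  rewrite (bounded_fci_iff T lt z HI (env 0) (Henv 0)).
  unfold empty_or_has_max, s_bot; split.
  - intros [Hempty|Hmax].
    + left; intros x Ax; exact (proj1 (Hempty x) Ax).
    + right; apply NNPP; intro Hno; apply Hmax; intro x; split; [|intros []].
      intro Mx; apply Hno; exists x; exact Mx.
  - intros [Hempty|[m Mm]].
    + left; intro x; split; [exact (Hempty x)|intros []].
    + right; intro Hno; exact (proj1 (Hno m) Mm).
Qed.
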